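(* Let $a<b$, $\lambda>0$, let $H(y):=\tfrac12\left(\tfrac12 y^2-\lambda\right)^2$ for $y\in\mathbb{R}$, let $\theta\in C[a,b]$ with $\min_{[a,b]}\theta>0$, and let $F\in C^1[a,b]$ with $F(a)=F(b)=0$, $F(x)\neq0$ for $x\in(a,b)$ and $\|F\|_\infty<(2\lambda/3)^{3/2}$. Let $X:=C_0[a,b]:=\{v\in C[a,b]\mid v(a)=v(b)=0\}$ and $K:X\to\mathbb{R}$, $K(v):=\int_a^b\theta\cdot(H\circ v-Fv)$. Then $K$ has exactly one stationary point $\overline v$. More precisely, for each $x\in[a,b]$, $\overline v(x)$ is the unique solution in the interval $\left(-\sqrt{2\lambda/3},\sqrt{2\lambda/3}\right)$ of the equation $z\left(\tfrac12 z^2-\lambda\right)=F(x)$.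
   Context: A point $v\in X$ is called a stationary point of $K$ if its Gâteaux derivative vanishes, i.e. $T_v(h):=\int_a^b\theta\left[v\left(\tfrac12 v^2-\lambda\right)-F\right]h=0$ for all $h\in X$ (this Gâteaux derivative is the same for each of the norms $\|\cdot\|_p$, $p\in[1,\infty]$, on $X$). *)

From Stdlib Require Import Reals.
From Coquelicot Require Import Coquelicot.
Open Scope R_scope.

Definition cont_on (a b : R) (f : R -> R) : Prop :=
  forall x, a <= x <= b ->
    filterlim f (within (fun y => a <= y <= b) (locally x)) (locally (f x)).

Definition C1_on (a b : R) (f : R -> R) : Prop :=
  exists f' : R -> R,
    cont_on a b f' /\
    forall x, a <= x <= b ->
      filterlim (fun y => (f y - f x) / (y - x))
        (within (fun y => a <= y <= b /\ y <> x) (locally x))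
        (locally (f' x)).

Definition in_C0 (a b : R) (v : R -> R) : Prop :=
  cont_on a b v /\ v a = 0 /\ v b = 0.

Definition sup_norm (a b : R) (f : R -> R) : Rbar :=
  Lub_Rbar (fun y => exists x, a <= x <= b /\ y = Rabs (f x)).

Definition H (lam y : R) : R := / 2 * (/ 2 * y ^ 2 - lam) ^ 2.

Definition K (a b lam : R) (theta F v : R -> R) : R :=
  RInt (fun x => theta x * (H lam (v x) - F x * v x)) a b.

(* Gateaux derivative T_v(h) of K at v in direction h. *)
Definition T (a b lam : R) (theta F v h : R -> R) : R :=
  RInt (fun x => theta x * (v x * (/ 2 * (v x) ^ 2 - lam) - F x) * h x) a b.

Definition stationary (a b lam : R) (theta F v : R -> R) : Prop :=
  in_C0 a b v /\ forall h, in_C0 a b h -> T a b lam theta F v h = 0.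

From Stdlib Require Import Reals.
From Coquelicot Require Import Coquelicot.
From Stdlib Require Import Lra Psatz ClassicalEpsilon.
Open Scope R_scope.

(* Write s = sqrt (2 lam / 3), so that lam = 3 s^2 / 2.  The cubic
   p(z) = z (z^2/2 - lam) has p' < 0 on (-s, s), p(-s) = s^3 and p(s) = -s^3,
   so |F| < s^3 gives for every x a unique root vbar(x) of p(z) = F(x) in
   (-s, s).  Since ||F|| < s^3 the roots stay at a uniform distance from +-s,
   where |p(z1) - p(z2)| >= kappa |z1 - z2| with kappa > 0; hence vbar
   inherits the continuity of F.  Testing T_w against
   h = theta (p o w - F) (x - a) (b - x) shows that w is stationary iff
   p o w = F on [a, b]; a stationary w starts at w(a) = 0 and can never reach
   +-s because |p(+-s)| = s^3 > |F|, so by the intermediate value theorem it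
   stays in (-s, s) and equals vbar. *)

(* [cont_on a b f] only constrains f on [a, b]; [f (clamp a b x)] is a
   continuous extension to all of R, to which the Stdlib continuity
   combinators and [IVT_cor] apply. *)
Definition clamp (a b x : R) : R := Rmax a (Rmin b x).

Lemma clamp_in a b x : a <= b -> a <= clamp a b x <= b.
Proof. intros; unfold clamp, Rmax, Rmin; repeat destruct Rle_dec; lra. Qed.

Lemma clamp_id a b x : a <= x <= b -> clamp a b x = x.
Proof. intros; unfold clamp, Rmax, Rmin; repeat destruct Rle_dec; lra. Qed.

Lemma clamp_1_lipschitz a b x y : a <= b ->
  Rabs (clamp a b y - clamp a b x) <= Rabs (y - x).
Proof.
  intros; unfold clamp, Rmax, Rmin; repeat destruct Rle_dec;
    unfold Rabs; repeat destruct Rcase_abs; lra.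
Qed.

Lemma cont_on_continuity_clamp a b f : a <= b -> cont_on a b f ->
  continuity (fun x => f (clamp a b x)).
Proof.
  intros hab hf x. apply continuity_pt_filterlim, filterlim_locally. intro eps.
  destruct (proj1 (filterlim_locally _ _) (hf _ (clamp_in a b x hab)) eps) as [del Hdel].
  exists del. intros y Hy. apply Hdel.
  - apply Rle_lt_trans with (2 := Hy). apply clamp_1_lipschitz; exact hab.
  - apply clamp_in; exact hab.
Qed.

Lemma cont_on_ext a b f g : (forall x, a <= x <= b -> f x = g x) ->
  cont_on a b f -> cont_on a b g.
Proof.
  intros hfg hf x Hx. apply filterlim_locally. intro eps.
  destruct (proj1 (filterlim_locally _ _) (hf x Hx) eps) as [del Hdel].
  exists del. intros y Hy Dy. rewrite <- (hfg x Hx), <- (hfg y Dy). apply Hdel; assumption.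
Qed.

Lemma continuity_cont_on a b f : continuity f -> cont_on a b f.
Proof.
  intros hf x _. apply filterlim_locally. intro eps.
  destruct (proj1 (filterlim_locally _ _) (proj1 (continuity_pt_filterlim _ _) (hf x)) eps)
    as [del Hdel].
  exists del. intros y Hy _. apply Hdel, Hy.
Qed.

Lemma C1_on_cont_on a b f : C1_on a b f -> cont_on a b f.
Proof.
  intros [f' [_ hd]] x Hx. apply filterlim_locally. intro eps.
  destruct (proj1 (filterlim_locally _ _) (hd x Hx) (mkposreal 1 Rlt_0_1)) as [d1 H1].
  set (L := Rabs (f' x) + 1).
  assert (HL : 0 < L) by (unfold L; pose proof (Rabs_pos (f' x)); lra).
  assert (Hr : 0 < eps / L) by (apply Rdiv_lt_0_compat; [apply cond_pos | exact HL]).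
  exists (mkposreal _ (Rmin_pos _ _ (cond_pos d1) Hr)). intros y Hy Dy.
  change (Rabs (y - x) < Rmin d1 (eps / L)) in Hy. change (Rabs (f y - f x) < eps).
  destruct (Req_dec y x) as [->|Hne].
  { rewrite Rminus_diag, Rabs_R0. apply cond_pos. }
  assert (Hq : Rabs ((f y - f x) / (y - x) - f' x) < 1).
  { apply (H1 y); [| split; assumption].
    apply Rlt_le_trans with (1 := Hy), Rmin_l. }
  replace (f y - f x) with ((f y - f x) / (y - x) * (y - x)) by (field; lra).
  rewrite Rabs_mult.
  apply Rle_lt_trans with (L * Rabs (y - x)).
  - apply Rmult_le_compat_r; [apply Rabs_pos |].
    pose proof (Rabs_triang_inv ((f y - f x) / (y - x)) (f' x)). unfold L; lra.
  - replace (pos eps) with (L * (eps / L)) by (field; lra).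
    apply Rmult_lt_compat_l; [exact HL |].
    apply Rlt_le_trans with (1 := Hy), Rmin_r.
Qed.

Lemma cont_on_IVT a b f c x y : cont_on a b f -> a <= x -> x <= y -> y <= b ->
  (f x - c) * (f y - c) <= 0 -> exists z, x <= z <= y /\ f z = c.
Proof.
  intros hf hax hxy hyb hsign.
  assert (hab : a <= b) by lra.
  destruct (IVT_cor (fun z => f (clamp a b z) - c) x y) as [z [Hz Hz0]].
  - apply continuity_minus; [apply cont_on_continuity_clamp; assumption |].
    apply continuity_const. intros u v; reflexivity.
  - exact hxy.
  - rewrite !clamp_id by lra. exact hsign.
  - exists z. split; [exact Hz |]. rewrite clamp_id in Hz0 by lra. lra.
Qed.

Lemma cont_on_Rabs_lt_of_avoid a b w c : a <= b -> cont_on a b w -> Rabs (w a) < c ->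
  (forall x, a <= x <= b -> Rabs (w x) <> c) -> forall x, a <= x <= b -> Rabs (w x) < c.
Proof.
  intros hab hw ha hne x Hx. apply Rabs_lt_between in ha.
  apply Rnot_le_lt. intro Hge.
  destruct (Rle_lt_dec c (w x)) as [Hup | Hlow].
  - destruct (cont_on_IVT a b w c a x) as [z [Hz Ez]]; try lra; [exact hw | nra |].
    apply (hne z); [lra |]. rewrite Ez. apply Rabs_right. lra.
  - assert (Hdown : w x <= - c).
    { destruct (Rcase_abs (w x)); [rewrite Rabs_left in Hge | rewrite Rabs_right in Hge]; lra. }
    destruct (cont_on_IVT a b w (- c) a x) as [z [Hz Ez]]; try lra; [exact hw | nra |].
    apply (hne z); [lra |]. rewrite Ez, Rabs_Ropp. apply Rabs_right. lra.
Qed.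

Lemma sup_norm_lt a b f M : a <= b -> Rbar_lt (sup_norm a b f) (Finite M) ->
  exists N, 0 <= N < M /\ forall x, a <= x <= b -> Rabs (f x) <= N.
Proof.
  intros hab hM. unfold sup_norm in hM.
  set (E := fun y => exists x, a <= x <= b /\ y = Rabs (f x)) in hM.
  assert (HE : forall x, a <= x <= b -> E (Rabs (f x))) by (intros x Hx; exists x; auto).
  destruct (Lub_Rbar_correct E) as [Hub _].
  destruct (Lub_Rbar E) as [r | |]; simpl in hM.
  - exists r. assert (Hr : forall x, a <= x <= b -> Rabs (f x) <= r)
      by (intros x Hx; exact (Hub _ (HE x Hx))).
    split; [split; [| exact hM] | exact Hr].
    apply Rle_trans with (Rabs (f a)); [apply Rabs_pos | apply Hr; lra].
  - contradiction.
  - destruct (Hub _ (HE a ltac:(lra))).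
Qed.

Lemma RInt_nonneg_eq0 (P : R -> R) a b : a < b -> continuity P ->
  (forall x, a < x < b -> 0 <= P x) -> RInt P a b = 0 ->
  forall x, a < x < b -> P x = 0.
Proof.
  intros hab hc hnn hI x0 Hx0.
  destruct (Req_dec (P x0) 0) as [E|Hne]; [exact E | exfalso].
  assert (Hp : 0 < P x0) by (pose proof (hnn x0 Hx0); lra).
  destruct (proj1 (filterlim_locally _ _) (proj1 (continuity_pt_filterlim _ _) (hc x0))
    (mkposreal _ Hp)) as [del Hdel].
  set (e := Rmin (del / 2) (Rmin ((x0 - a) / 2) ((b - x0) / 2))).
  assert (He : 0 < e).
  { unfold e. pose proof (cond_pos del). repeat apply Rmin_pos; lra. }
  assert (He1 : e <= del / 2) by apply Rmin_l.
  assert (He2 : e <= (x0 - a) / 2) by (eapply Rle_trans; [apply Rmin_r | apply Rmin_l]).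
  assert (He3 : e <= (b - x0) / 2) by (eapply Rle_trans; [apply Rmin_r | apply Rmin_r]).
  assert (Hcont : forall z, continuous P z) by (intro z; apply continuity_pt_filterlim, hc).
  assert (Hex : forall u v, ex_RInt P u v)
    by (intros u v; apply (ex_RInt_continuous (V := R_CompleteNormedModule)); intros z _; apply Hcont).
  assert (I1 : 0 <= RInt P a (x0 - e)) by (apply RInt_ge_0; [lra | apply Hex | intros; apply hnn; lra]).
  assert (I3 : 0 <= RInt P (x0 + e) b) by (apply RInt_ge_0; [lra | apply Hex | intros; apply hnn; lra]).
  assert (I2 : 0 < RInt P (x0 - e) (x0 + e)).
  { apply RInt_gt_0; [lra | | intros; apply Hcont].
    intros y Hy.
    assert (Hb : Rabs (P y - P x0) < P x0).
    { apply Hdel. change (Rabs (y - x0) < del). apply Rabs_def1; lra. }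
    apply Rabs_def2 in Hb. lra. }
  rewrite <- (RInt_Chasles P a (x0 - e) b), <- (RInt_Chasles P (x0 - e) (x0 + e) b) in hI
    by apply Hex.
  change (RInt P a (x0 - e) + (RInt P (x0 - e) (x0 + e) + RInt P (x0 + e) b) = 0) in hI.
  lra.
Qed.

Definition cubic (lam z : R) : R := z * (/ 2 * z ^ 2 - lam).

Lemma cubic_sub lam z1 z2 :
  cubic lam z1 - cubic lam z2 = (z1 - z2) * ((z1 * z1 + z1 * z2 + z2 * z2) / 2 - lam).
Proof. unfold cubic; field. Qed.

Lemma cubic_sub_lower_bound lam t z1 z2 : Rabs z1 <= t -> Rabs z2 <= t ->
  (lam - 3 / 2 * (t * t)) * Rabs (z1 - z2) <= Rabs (cubic lam z1 - cubic lam z2).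
Proof.
  intros h1 h2. rewrite cubic_sub, Rabs_mult, Rmult_comm.
  apply Rmult_le_compat_l; [apply Rabs_pos |].
  apply Rabs_le_between in h1 as [h1 h1']; apply Rabs_le_between in h2 as [h2 h2'].
  eapply Rle_trans; [| rewrite <- Rabs_Ropp; apply Rle_abs]. nra.
Qed.

Section CubicOnCriticalInterval.

Variable lam : R.
Hypothesis lam_gt0 : 0 < lam.

Let s := sqrt (2 * lam / 3).

Let s_gt0 : 0 < s.
Proof. apply sqrt_lt_R0; lra. Qed.

Let lam_eq : lam = 3 / 2 * (s * s).
Proof. unfold s. rewrite sqrt_sqrt; lra. Qed.

Lemma cubic_add_cube z : cubic lam z + s ^ 3 = (z - s) ^ 2 * (z + 2 * s) / 2.
Proof. rewrite lam_eq; unfold cubic; field. Qed.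

Lemma cube_sub_cubic z : s ^ 3 - cubic lam z = (z + s) ^ 2 * (2 * s - z) / 2.
Proof. rewrite lam_eq; unfold cubic; field. Qed.

Lemma Rabs_cubic_boundary z : Rabs z = s -> Rabs (cubic lam z) = s ^ 3.
Proof.
  intro hz. assert (Hs3 : 0 < s ^ 3) by (apply pow_lt, s_gt0).
  destruct (Rcase_abs z) as [Hz | Hz].
  - rewrite Rabs_left in hz by exact Hz. replace z with (- s) by lra.
    pose proof (cube_sub_cubic (- s)). replace (- s + s) with 0 in * by ring.
    rewrite Rabs_right; lra.
  - rewrite Rabs_right in hz by exact Hz. subst z.
    pose proof (cubic_add_cube s). rewrite Rminus_diag in *. rewrite Rabs_left; lra.
Qed.

Lemma cubic_inj_on_critical z1 z2 : -s < z1 < s -> -s < z2 < s ->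
  cubic lam z1 = cubic lam z2 -> z1 = z2.
Proof.
  intros h1 h2 he.
  assert (Hd := cubic_sub lam z1 z2). rewrite he, Rminus_diag in Hd.
  assert (Hneg : (z1 * z1 + z1 * z2 + z2 * z2) / 2 - lam < 0) by (rewrite lam_eq; nra).
  symmetry in Hd. apply Rmult_integral in Hd as [Hd | Hd]; lra.
Qed.

Lemma cubic_root_exists c : Rabs c < s ^ 3 -> exists z, -s < z < s /\ cubic lam z = c.
Proof.
  intro hc. apply Rabs_def2 in hc as [hc hc'].
  pose proof (cubic_add_cube s) as Es; pose proof (cube_sub_cubic (- s)) as Ems.
  replace (s - s) with 0 in Es by ring. replace (- s + s) with 0 in Ems by ring.
  destruct (IVT_cor (fun z => cubic lam z - c) (- s) s) as [z [Hz Hz0]].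
  - unfold cubic. reg.
  - lra.
  - cbv beta. assert (0 < s ^ 3) by (apply pow_lt, s_gt0). nra.
  - exists z. cbv beta in Hz0. split; [| lra].
    split; apply Rnot_le_lt; intro Hle;
      [replace z with (- s) in Hz0 by lra | replace z with s in Hz0 by lra]; lra.
Qed.

(* With [d = (s^3 - N) / (3 s^2)], the identities [cubic_add_cube] and
   [cube_sub_cubic] give [s^3 - N <= 3 s^2 (s -/+ z)], i.e. [|z| <= s - d]. *)
Lemma cubic_root_margin N : 0 <= N < s ^ 3 ->
  exists t, 0 <= t < s /\
    forall z, -s < z < s -> Rabs (cubic lam z) <= N -> Rabs z <= t.
Proof.
  intros [hN hNs].
  assert (hss : 0 < s * s) by (pose proof s_gt0; nra).
  set (d := (s ^ 3 - N) / (3 * (s * s))).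
  assert (Hd : d * (3 * (s * s)) = s ^ 3 - N) by (unfold d; field; lra).
  assert (Hd0 : 0 < d) by (unfold d; apply Rdiv_lt_0_compat; lra).
  assert (Hds : d <= s / 3) by (pose proof s_gt0; nra).
  exists (s - d). split; [lra |].
  intros z hz hp. apply Rabs_le_between in hp as [hp hp'].
  pose proof (cubic_add_cube z) as Ep; pose proof (cube_sub_cubic z) as Em.
  assert (A : d <= s - z).
  { assert ((s - z) * (z + 2 * s) <= 6 * (s * s)) by nra.
    assert ((z - s) ^ 2 * (z + 2 * s) / 2 <= 3 * (s * s) * (s - z)) by nra.
    apply Rmult_le_reg_r with (3 * (s * s)); nra. }
  assert (B : d <= s + z).
  { assert ((s + z) * (2 * s - z) <= 6 * (s * s)) by nra.
    assert ((z + s) ^ 2 * (2 * s - z) / 2 <= 3 * (s * s) * (s + z)) by nra.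
    apply Rmult_le_reg_r with (3 * (s * s)); nra. }
  apply Rabs_le; lra.
Qed.

Lemma cont_on_of_cont_on_cubic a b t v : 0 <= t < s ->
  (forall x, a <= x <= b -> Rabs (v x) <= t) ->
  cont_on a b (fun x => cubic lam (v x)) -> cont_on a b v.
Proof.
  intros ht hv hpv x Hx.
  set (kap := lam - 3 / 2 * (t * t)).
  assert (Hk : 0 < kap) by (unfold kap; rewrite lam_eq; nra).
  apply filterlim_locally. intro eps.
  assert (He : 0 < kap * eps) by (apply Rmult_lt_0_compat; [exact Hk | apply cond_pos]).
  destruct (proj1 (filterlim_locally _ _) (hpv x Hx) (mkposreal _ He)) as [del Hdel].
  exists del. intros y Hy Dy.
  specialize (Hdel y Hy Dy). change (Rabs (cubic lam (v y) - cubic lam (v x)) < kap * eps) in Hdel.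
  change (Rabs (v y - v x) < eps).
  pose proof (cubic_sub_lower_bound lam t (v y) (v x) (hv y Dy) (hv x Hx)) as Hlow.
  fold kap in Hlow. apply Rmult_lt_reg_l with kap; lra.
Qed.

Definition cubic_root (c : R) : R :=
  epsilon (inhabits 0) (fun z => -s < z < s /\ cubic lam z = c).

Lemma cubic_root_spec c : Rabs c < s ^ 3 ->
  -s < cubic_root c < s /\ cubic lam (cubic_root c) = c.
Proof. intro hc. unfold cubic_root. apply epsilon_spec, cubic_root_exists, hc. Qed.

Lemma cubic_root_unique c z : Rabs c < s ^ 3 -> -s < z < s -> cubic lam z = c ->
  z = cubic_root c.
Proof.
  intros hc hz E. destruct (cubic_root_spec c hc) as [h1 h2].
  apply cubic_inj_on_critical; [exact hz | exact h1 | congruence].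
Qed.

End CubicOnCriticalInterval.

Lemma stationary_of_cubic_eq a b lam theta F v : a <= b -> in_C0 a b v ->
  (forall x, a <= x <= b -> cubic lam (v x) = F x) -> stationary a b lam theta F v.
Proof.
  intros hab hv hvF. split; [exact hv |]. intros h _. unfold T.
  rewrite (RInt_ext _ (fun _ => 0)).
  - rewrite RInt_const. apply Rmult_0_r.
  - rewrite Rmin_left, Rmax_right by exact hab. intros x Hx.
    change (v x * (/ 2 * v x ^ 2 - lam)) with (cubic lam (v x)).
    rewrite hvF by lra. rewrite Rminus_diag, Rmult_0_r. apply Rmult_0_l.
Qed.

Lemma stationary_cubic_eq a b lam theta F w : a < b ->
  cont_on a b theta -> (forall x, a <= x <= b -> 0 < theta x) ->
  cont_on a b F -> F a = 0 -> F b = 0 ->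
  stationary a b lam theta F w -> forall x, a <= x <= b -> cubic lam (w x) = F x.
Proof.
  intros hab htc htp hFc hFa hFb [[hwc [hwa hwb]] hw].
  assert (hab' : a <= b) by lra.
  set (phi := fun y => theta (clamp a b y) * (cubic lam (w (clamp a b y)) - F (clamp a b y))).
  set (bump := fun y => (y - a) * (b - y)).
  assert (Hphi : continuity phi).
  { apply continuity_mult; [apply cont_on_continuity_clamp; assumption |].
    apply continuity_minus; [| apply cont_on_continuity_clamp; assumption].
    apply (continuity_comp (fun y => w (clamp a b y)) (cubic lam));
      [apply cont_on_continuity_clamp; assumption | unfold cubic; reg]. }
  assert (Hbump : continuity bump) by (unfold bump; reg).
  (* The residual phi itself, damped to vanish at a and b, is an admissible
     direction; it turns T_w into the integral of phi^2 (x - a) (b - x). *)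
  assert (Htest : in_C0 a b (fun y => phi y * bump y)).
  { split; [apply continuity_cont_on, continuity_mult; assumption |].
    unfold bump; split; ring. }
  specialize (hw _ Htest). unfold T in hw.
  rewrite (RInt_ext _ (fun y => phi y ^ 2 * bump y)) in hw.
  2: { rewrite Rmin_left, Rmax_right by exact hab'. intros y Hy.
       unfold phi, cubic. rewrite clamp_id by lra. simpl. ring. }
  assert (Hzero := RInt_nonneg_eq0 (fun y => phi y ^ 2 * bump y) a b hab).
  intros x Hx.
  destruct (Req_dec x a) as [-> | Ha]; [rewrite hwa, hFa; unfold cubic; ring |].
  destruct (Req_dec x b) as [-> | Hb]; [rewrite hwb, hFb; unfold cubic; ring |].
  assert (Hbx : 0 < bump x) by (unfold bump; nra).
  assert (Hphix : phi x = 0).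
  { assert (Hsq : phi x ^ 2 * bump x = 0).
    { apply Hzero; [| | exact hw | lra].
      - apply continuity_mult; [| exact Hbump].
        apply (continuity_comp phi (fun u => u ^ 2)); [exact Hphi | reg].
      - intros y Hy. unfold bump. apply Rmult_le_pos; [apply pow2_ge_0 | nra]. }
    apply Rmult_integral in Hsq as [Hsq | Hsq]; [| lra].
    nra. }
  unfold phi in Hphix. rewrite clamp_id in Hphix by lra.
  apply Rmult_integral in Hphix as [Hth | Hc].
  - pose proof (htp x ltac:(lra)). lra.
  - lra.
Qed.

Lemma Rpower_3_2 x : 0 < x -> Rpower x (3 / 2) = sqrt x ^ 3.
Proof.
  intro hx. replace (3 / 2) with (1 + / 2) by field.
  rewrite Rpower_plus, Rpower_1, Rpower_sqrt by exact hx.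
  rewrite <- (sqrt_sqrt x) at 1 by lra. ring.
Qed.

Theorem proposition2 (a b lam : R) (theta F : R -> R)
  (hab : a < b) (hlam : 0 < lam)
  (htheta_cont : cont_on a b theta)
  (htheta_pos : forall x, a <= x <= b -> 0 < theta x)
  (hF : C1_on a b F) (hFa : F a = 0) (hFb : F b = 0)
  (hFnz : forall x, a < x < b -> F x <> 0)
  (hFnorm : Rbar_lt (sup_norm a b F) (Finite (Rpower (2 * lam / 3) (3 / 2)))) :
  exists vbar : R -> R,
    stationary a b lam theta F vbar /\
    (forall w, stationary a b lam theta F w ->
       forall x, a <= x <= b -> w x = vbar x) /\
    (forall x, a <= x <= b ->
       - sqrt (2 * lam / 3) < vbar x < sqrt (2 * lam / 3) /\
       vbar x * (/ 2 * (vbar x) ^ 2 - lam) = F x /\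
       (forall z, - sqrt (2 * lam / 3) < z < sqrt (2 * lam / 3) ->
          z * (/ 2 * z ^ 2 - lam) = F x -> z = vbar x)).
Proof.
  set (s := sqrt (2 * lam / 3)).
  assert (Hs : 0 < s) by (apply sqrt_lt_R0; lra).
  rewrite Rpower_3_2 in hFnorm by lra. fold s in hFnorm.
  destruct (sup_norm_lt a b F _ (Rlt_le _ _ hab) hFnorm) as [N [HN HFN]].
  assert (HF : forall x, a <= x <= b -> Rabs (F x) < s ^ 3)
    by (intros x Hx; specialize (HFN x Hx); lra).
  assert (HFc := C1_on_cont_on a b F hF).
  set (vbar := fun x => cubic_root lam (F x)).
  assert (Hvbar : forall x, a <= x <= b -> -s < vbar x < s /\ cubic lam (vbar x) = F x)
    by (intros x Hx; apply cubic_root_spec, HF; assumption).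
  assert (Hvanish : forall x, F x = 0 -> vbar x = 0).
  { intros x E. symmetry. apply cubic_root_unique; fold s; [exact hlam | | lra | ].
    - rewrite E, Rabs_R0. apply pow_lt, Hs.
    - rewrite E. unfold cubic. ring. }
  assert (Hvbar_C0 : in_C0 a b vbar).
  { destruct (cubic_root_margin lam hlam N HN) as [t [Ht Hmargin]].
    split; [| split; apply Hvanish; assumption].
    apply (cont_on_of_cont_on_cubic lam hlam a b t); [exact Ht | |].
    - intros x Hx. destruct (Hvbar x Hx) as [Hin E].
      apply Hmargin; [exact Hin |]. rewrite E. apply HFN, Hx.
    - apply (cont_on_ext a b F); [| exact HFc].
      intros x Hx. symmetry. apply Hvbar, Hx. }
  exists vbar. split; [| split].
  - apply stationary_of_cubic_eq; [lra | exact Hvbar_C0 |].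
    intros x Hx. apply Hvbar, Hx.
  - intros w Hw x Hx.
    pose proof (stationary_cubic_eq a b lam theta F w hab htheta_cont htheta_pos HFc
      hFa hFb Hw) as HwF.
    destruct Hw as [[Hwc [Hwa _]] _].
    assert (Hin : Rabs (w x) < s).
    { apply (cont_on_Rabs_lt_of_avoid a b w s); [lra | exact Hwc | | | exact Hx].
      - rewrite Hwa, Rabs_R0. exact Hs.
      - intros y Hy E. apply (Rabs_cubic_boundary lam hlam) in E.
        rewrite HwF in E by exact Hy. fold s in E. pose proof (HF y Hy). lra. }
    apply cubic_root_unique; fold s; [exact hlam | apply HF, Hx | apply Rabs_lt_between, Hin |].
    apply HwF, Hx.
  - intros x Hx. destruct (Hvbar x Hx) as [Hin E].
    split; [exact Hin | split; [exact E |]].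
    intros z Hz Ez. apply cubic_root_unique; fold s; [exact hlam | apply HF, Hx | exact Hz | exact Ez].
Qed.
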